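(* Let $a,b,c\in\mathbb{R}$ be such that $$B=\begin{pmatrix}1&a&b\\ a&1&c\\ b&c&1\end{pmatrix}$$ is positive semidefinite. Let $\mathbb{I}\subseteq[0,\infty)$ be an interval and $f:\mathbb{I}\to[-1,1]$ a strictly decreasing function with range $[-1,1]$ satisfying $f(p+q)=f(p)f(q)-\sqrt{1-f(p)^2}\sqrt{1-f(q)^2}$ whenever $p,q,p+q\in\mathbb{I}$. Let $g:[0,\infty)\to[0,\infty)$ be metric-preserving and set $h=g\circ f^{-1}$. Then $$h(a)\le h(b)+h(c).$$ Consequently, for every real $k\ge2$, $$\sqrt[k]{1-|a|^k}\le\sqrt[k]{1-|b|^k}+\sqrt[k]{1-|c|^k}.$$
   Context: A function $g:[0,\infty)\to[0,\infty)$ is metric-preserving if for every metric space $(M,d)$, the function $g\circ d$ is again a metric on $M$. *)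

From Stdlib Require Import Reals.
Open Scope R_scope.

(* B = [[1,a,b],[a,1,c],[b,c,1]] is positive semidefinite:
   v^T B v >= 0 for every v = (x,y,z) in R^3. *)
Definition psd3 (a b c : R) : Prop :=
  forall x y z : R,
    0 <= x*x + y*y + z*z + 2*a*x*y + 2*b*x*z + 2*c*y*z.

Definition interval_in_nonneg (I : R -> Prop) : Prop :=
  (forall x, I x -> 0 <= x) /\
  (forall x y z, I x -> I z -> x <= y -> y <= z -> I y).

Definition is_metric (M : Type) (d : M -> M -> R) : Prop :=
  (forall x y, 0 <= d x y) /\
  (forall x y, d x y = 0 <-> x = y) /\
  (forall x y, d x y = d y x) /\
  (forall x y z, d x z <= d x y + d y z).

Definition metric_preserving (g : R -> R) : Prop :=
  (forall x, 0 <= x -> 0 <= g x) /\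
  (forall (M : Type) (d : M -> M -> R), is_metric M d -> is_metric M (fun x y => g (d x y))).

(* x^y for x >= 0, y > 0 real, with the convention 0^y = 0
   (Stdlib's Rpower 0 y = 1, so we guard it). *)
Definition rpow (x y : R) : R :=
  if Rlt_dec 0 x then Rpower x y else 0.

(* Positive semidefiniteness of B makes a, b, c the cosines of the angles between three unit
   vectors, which yields a >= b c - sqrt(1 - b^2) sqrt(1 - c^2) and its permutations.  Since f
   behaves like a decreasing cosine, its addition formula turns these into the triangle
   inequalities for f^-1(a), f^-1(b), f^-1(c), and a metric-preserving g keeps any triangle
   inequality (realise the three numbers as the distances of a three-point space).

   For the second claim pass to sines s = sqrt(1 - t^2): the angle inequality becomes
   s_a <= s_b + s_c, and psi(s) = (1 - (1 - s^2)^(k/2))^(1/k) is nondecreasing with psi(s)/s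
   nonincreasing (by convexity of x |-> x^(k/2)), hence subadditive on [0,1]. *)

From Stdlib Require Import Reals Lra Psatz.
Open Scope R_scope.

Lemma psd3_swap_bc a b c : psd3 a b c -> psd3 a c b.
Proof. intros H x y z. specialize (H y x z). lra. Qed.

Lemma psd3_swap_ab a b c : psd3 a b c -> psd3 b a c.
Proof. intros H x y z. specialize (H x z y). lra. Qed.

Lemma psd3_opp_ab a b c : psd3 a b c -> psd3 (-a) (-b) c.
Proof. intros H x y z. specialize (H (-x) y z). lra. Qed.

Lemma psd3_abs_le1 a b c : psd3 a b c -> Rabs a <= 1 /\ Rabs b <= 1 /\ Rabs c <= 1.
Proof.
  intros H.
  pose proof (H 1 (-a) 0). pose proof (H 1 0 (-b)). pose proof (H 0 1 (-c)).
  pose proof (pow2_abs a). pose proof (pow2_abs b). pose proof (pow2_abs c).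
  pose proof (Rabs_pos a). pose proof (Rabs_pos b). pose proof (Rabs_pos c).
  repeat split; nra.
Qed.

Lemma psd2_offdiag_ge A C D :
  (forall x y, 0 <= A*x*x + C*y*y + 2*D*x*y) -> - (sqrt A * sqrt C) <= D.
Proof.
  intros H.
  assert (hA : 0 <= A) by (specialize (H 1 0); lra).
  assert (hC : 0 <= C) by (specialize (H 0 1); lra).
  pose proof (sqrt_sqrt A hA). pose proof (sqrt_sqrt C hC).
  pose proof (sqrt_pos A). pose proof (sqrt_pos C).
  destruct (Req_dec (sqrt A) 0) as [zA|nA].
  - assert (A = 0) by nra. subst A.
    specialize (H (C+1) (-D)). assert (D = 0) by nra. rewrite zA. lra.
  - destruct (Req_dec (sqrt C) 0) as [zC|nC].
    + assert (C = 0) by nra. subst C.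
      specialize (H (-D) (A+1)). assert (D = 0) by nra. rewrite zC. lra.
    + specialize (H (sqrt C) (sqrt A)).
      assert (0 < sqrt A * sqrt C) by (apply Rmult_lt_0_compat; lra).
      nra.
Qed.

(* Restricting the form to z = -(b x + c y) leaves the 2x2 form with off-diagonal entry a - b c. *)
Lemma psd3_cos_angle_ge a b c :
  psd3 a b c -> b*c - sqrt (1 - b^2) * sqrt (1 - c^2) <= a.
Proof.
  intros H.
  assert (H2 : forall x y, 0 <= (1 - b^2)*x*x + (1 - c^2)*y*y + 2*(a - b*c)*x*y).
  { intros x y. specialize (H x y (-(b*x + c*y))). lra. }
  pose proof (psd2_offdiag_ge _ _ _ H2). lra.
Qed.

Lemma psd3_abs_cos_angle_ge a b c : psd3 a b c ->
  Rabs b * Rabs c - sqrt (1 - Rabs b ^ 2) * sqrt (1 - Rabs c ^ 2) <= Rabs a.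
Proof.
  intros H. rewrite !pow2_abs, <- Rabs_mult.
  pose proof (Rle_abs a). pose proof (Rle_abs (-a)). rewrite Rabs_Ropp in *.
  destruct (Rle_lt_dec 0 (b*c)).
  - rewrite Rabs_right by lra. pose proof (psd3_cos_angle_ge a b c H). lra.
  - rewrite Rabs_left by lra. pose proof (psd3_cos_angle_ge _ _ _ (psd3_opp_ab a b c H)).
    replace ((-b)^2) with (b^2) in * by ring. lra.
Qed.

Lemma metric_preserving_0 g : metric_preserving g -> g 0 = 0.
Proof.
  intros [_ Hg].
  assert (Hd : is_metric unit (fun _ _ => 0)).
  { repeat split; intros; try destruct x, y; try lra; reflexivity. }
  destruct (Hg unit _ Hd) as [_ [H0 _]]. apply (H0 tt tt). reflexivity.
Qed.

Inductive vertex3 := V1 | V2 | V3.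

Lemma metric_preserving_triangle g x y z : metric_preserving g ->
  0 <= x -> 0 <= y -> 0 <= z -> x <= y + z -> y <= x + z -> z <= x + y ->
  g x <= g y + g z.
Proof.
  intros Hg hx hy hz t1 t2 t3.
  pose proof (metric_preserving_0 g Hg) as G0. destruct Hg as [Gnn Hg].
  destruct (Req_dec x 0) as [->|nx].
  { rewrite G0. pose proof (Gnn y hy). pose proof (Gnn z hz). lra. }
  (* a vanishing side forces the other two to coincide; otherwise x, y, z are the
     side lengths of a genuine three-point metric space *)
  destruct (Req_dec y 0) as [->|ny]. { replace z with x by lra. rewrite G0. lra. }
  destruct (Req_dec z 0) as [->|nz]. { replace y with x by lra. rewrite G0. lra. }
  pose (d := fun p q : vertex3 => match p, q with
     | V1, V2 | V2, V1 => x | V1, V3 | V3, V1 => y | V2, V3 | V3, V2 => z | _, _ => 0 end).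
  assert (Hd : is_metric vertex3 d).
  { split; [|split; [|split]].
    - intros [] []; simpl; lra.
    - intros [] []; simpl; split; intro; try congruence; lra.
    - intros [] []; reflexivity.
    - intros [] [] []; simpl; lra. }
  destruct (Hg vertex3 d Hd) as [_ [_ [_ Htri]]].
  exact (Htri V1 V3 V2).
Qed.

Section Decreasing_addition_formula.

Variables (I : R -> Prop) (f : R -> R).
Hypothesis I_interval : interval_in_nonneg I.
Hypothesis f_decr : forall p q, I p -> I q -> p < q -> f q < f p.
Hypothesis f_add : forall p q, I p -> I q -> I (p + q) ->
  f (p + q) = f p * f q - sqrt (1 - f p ^ 2) * sqrt (1 - f q ^ 2).

Lemma le_add_of_cos_angle_le p q r : I p -> I q -> I r ->
  f q * f r - sqrt (1 - f q ^ 2) * sqrt (1 - f r ^ 2) <= f p -> p <= q + r.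
Proof.
  intros Ip Iq Ir Hle. apply Rnot_lt_le; intro Hlt.
  destruct I_interval as [I_nonneg I_convex].
  pose proof (I_nonneg r Ir).
  assert (Iqr : I (q + r)) by (apply (I_convex q _ p); auto; lra).
  pose proof (f_decr _ _ Iqr Ip Hlt). rewrite (f_add q r) in * by assumption. lra.
Qed.

Lemma psd3_inv_triangle pa pb pc : I pa -> I pb -> I pc ->
  psd3 (f pa) (f pb) (f pc) ->
  pa <= pb + pc /\ pb <= pa + pc /\ pc <= pa + pb.
Proof.
  intros Ia Ib Ic H. repeat split; apply le_add_of_cos_angle_le; auto.
  - exact (psd3_cos_angle_ge _ _ _ H).
  - exact (psd3_cos_angle_ge _ _ _ (psd3_swap_ab _ _ _ H)).
  - exact (psd3_cos_angle_ge _ _ _ (psd3_swap_ab _ _ _ (psd3_swap_bc _ _ _ H))).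
Qed.

End Decreasing_addition_formula.

Lemma rpow_0_l e : rpow 0 e = 0.
Proof. unfold rpow. destruct (Rlt_dec 0 0); lra. Qed.

Lemma rpow_pos x e : 0 < x -> rpow x e = Rpower x e.
Proof. intro h. unfold rpow. destruct (Rlt_dec 0 x); lra. Qed.

Lemma rpow_ge0 x e : 0 <= rpow x e.
Proof. unfold rpow, Rpower. destruct (Rlt_dec 0 x); [left; apply exp_pos | lra]. Qed.

Lemma rpow_1_l e : rpow 1 e = 1.
Proof. rewrite rpow_pos by lra. unfold Rpower. rewrite ln_1, Rmult_0_r. apply exp_0. Qed.

Lemma rpow_1_r x : 0 <= x -> rpow x 1 = x.
Proof.
  intros hx. destruct (Req_dec x 0) as [->|nx]; [apply rpow_0_l|].
  rewrite rpow_pos by lra. apply Rpower_1; lra.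
Qed.

Lemma rpow_le_compat x y e : 0 <= x <= y -> 0 <= e -> rpow x e <= rpow y e.
Proof.
  intros hxy he. destruct (Req_dec x 0) as [->|nx].
  - rewrite rpow_0_l. apply rpow_ge0.
  - rewrite !rpow_pos by lra. apply Rle_Rpower_l; lra.
Qed.

Lemma rpow_lt_compat x y e : 0 <= x < y -> 0 < e -> rpow x e < rpow y e.
Proof.
  intros hxy he. destruct (Req_dec x 0) as [->|nx].
  - rewrite rpow_0_l, rpow_pos by lra. apply exp_pos.
  - rewrite !rpow_pos by lra. apply Rlt_Rpower_l; lra.
Qed.

Lemma rpow_le_reg x y e : 0 <= x -> 0 <= y -> 0 < e -> rpow x e <= rpow y e -> x <= y.
Proof.
  intros hx hy he h. apply Rnot_lt_le; intro hyx.
  pose proof (rpow_lt_compat y x e (conj hy hyx) he). lra.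
Qed.

Lemma rpow_le_1 x e : 0 <= x <= 1 -> 0 <= e -> rpow x e <= 1.
Proof. intros hx he. rewrite <- (rpow_1_l e). apply rpow_le_compat; lra. Qed.

Lemma rpow_mult_distr x y e : 0 <= x -> 0 <= y -> rpow (x*y) e = rpow x e * rpow y e.
Proof.
  intros hx hy. destruct (Req_dec x 0) as [->|nx]. { rewrite Rmult_0_l, !rpow_0_l. ring. }
  destruct (Req_dec y 0) as [->|ny]. { rewrite Rmult_0_r, !rpow_0_l. ring. }
  rewrite !rpow_pos by nra. symmetry; apply Rpower_mult_distr; lra.
Qed.

Lemma rpow_mult x e1 e2 : 0 <= x -> rpow (rpow x e1) e2 = rpow x (e1*e2).
Proof.
  intros hx. destruct (Req_dec x 0) as [->|nx]. { rewrite !rpow_0_l. reflexivity. }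
  rewrite (rpow_pos x), rpow_pos, rpow_pos by (try apply exp_pos; lra).
  apply Rpower_mult.
Qed.

Lemma rpow_sqr x e : 0 <= x -> rpow (x^2) (e/2) = rpow x e.
Proof.
  intros hx. destruct (Req_dec x 0) as [->|nx]. { rewrite pow_i, !rpow_0_l by lia. reflexivity. }
  rewrite !rpow_pos by nra. unfold Rpower.
  rewrite ln_pow by lra. f_equal. simpl. field.
Qed.

Lemma rpow_le_self x p : 0 <= x <= 1 -> 1 <= p -> rpow x p <= x.
Proof.
  intros hx hp. destruct (Req_dec x 0) as [->|nx]; [rewrite rpow_0_l; lra|].
  rewrite rpow_pos by lra. replace p with (1 + (p - 1)) by ring.
  rewrite Rpower_plus, Rpower_1 by lra.
  assert (hle : Rpower x (p - 1) <= Rpower 1 (p - 1)) by (apply Rle_Rpower_l; lra).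
  rewrite <- (rpow_pos 1), rpow_1_l in hle by lra.
  nra.
Qed.

Lemma rpow_bernoulli x p : 0 <= x -> 1 <= p -> 1 + p*(x - 1) <= rpow x p.
Proof.
  intros hx hp. destruct (Req_dec x 0) as [->|nx]. { rewrite rpow_0_l. lra. }
  assert (ln_le : forall z, 0 < z -> ln z <= z - 1).
  { intros z hz. pose proof (exp_ineq1_le (ln z)). rewrite exp_ln in * by lra. lra. }
  rewrite rpow_pos by lra. set (y := Rpower x p).
  assert (hy : 0 < y) by apply exp_pos.
  (* ln z <= z - 1 at z = y/x and at z = 1/x; combine and multiply by x *)
  pose proof (ln_le (y / x) ltac:(apply Rdiv_lt_0_compat; lra)) as h1.
  pose proof (ln_le (/ x) ltac:(apply Rinv_0_lt_compat; lra)) as h2.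
  unfold Rdiv in h1. rewrite ln_mult in h1 by (try apply Rinv_0_lt_compat; lra).
  rewrite ln_Rinv in h1, h2 by lra. rewrite (ln_Rpower x p : ln y = p * ln x) in h1.
  assert (h3 : (p - 1) * (- ln x) <= (p - 1) * (/ x - 1)) by (apply Rmult_le_compat_l; lra).
  assert (h4 : 0 <= x * (y * / x - 1 + (p - 1) * (/ x - 1))) by (apply Rmult_le_pos; lra).
  replace (x * (y * / x - 1 + (p - 1) * (/ x - 1))) with (y - x + (p - 1) - (p - 1) * x) in h4
    by (field; lra).
  lra.
Qed.

Lemma rpow_tangent_le c w p : 0 < c -> 0 <= w -> 1 <= p ->
  rpow c p + p * (rpow c p / c) * (w - c) <= rpow w p.
Proof.
  intros hc hw hp.
  assert (hwc : 0 <= w / c) by (apply Rle_mult_inv_pos; lra).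
  replace w with (c * (w / c)) at 2 by (field; lra).
  rewrite rpow_mult_distr by lra.
  pose proof (rpow_bernoulli (w / c) p hwc hp).
  pose proof (rpow_ge0 c p).
  replace (rpow c p + p * (rpow c p / c) * (w - c))
    with (rpow c p * (1 + p * (w / c - 1))) by (field; lra).
  apply Rmult_le_compat_l; lra.
Qed.

Lemma rpow_convex_1 z l p : 0 <= z -> 0 <= l <= 1 -> 1 <= p ->
  rpow (1 - l + l*z) p <= 1 - l + l * rpow z p.
Proof.
  intros hz hl hp. set (c := 1 - l + l*z).
  assert (hc : 0 <= c) by (unfold c; nra).
  destruct (Req_dec c 0) as [E|nc]. { rewrite E, rpow_0_l. pose proof (rpow_ge0 z p). nra. }
  pose proof (rpow_tangent_le c 1 p ltac:(lra) ltac:(lra) hp) as t1.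
  pose proof (rpow_tangent_le c z p ltac:(lra) hz hp) as t2.
  rewrite rpow_1_l in t1.
  set (C := rpow c p) in *. set (K := p * (C / c)) in *.
  assert (e1 : (1 - l) * (C + K * (1 - c)) <= (1 - l) * 1) by (apply Rmult_le_compat_l; lra).
  assert (e2 : l * (C + K * (z - c)) <= l * rpow z p) by (apply Rmult_le_compat_l; lra).
  assert (E : (1 - l) * (C + K * (1 - c)) + l * (C + K * (z - c)) = C) by (unfold c; ring).
  lra.
Qed.

(* (1 - (1 - x)^p) / x^p is nonincreasing on (0, 1]: write 1 - x as the convex combination
   of 1 and 1 - y with weight x/y. *)
Lemma rpow_compl_cross_le x y p : 0 < x -> x <= y -> y <= 1 -> 1 <= p ->
  rpow x p * (1 - rpow (1 - y) p) <= rpow y p * (1 - rpow (1 - x) p).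
Proof.
  intros hx hxy hy hp. set (l := x / y).
  assert (hl : 0 <= l <= 1).
  { unfold l; split; [apply Rle_mult_inv_pos; lra|].
    apply (Rmult_le_reg_r y); [lra|]. unfold Rdiv. rewrite Rmult_assoc, Rinv_l; lra. }
  assert (Ex : x = l * y) by (unfold l; field; lra).
  pose proof (rpow_convex_1 (1 - y) l p ltac:(lra) hl hp) as hconv.
  replace (1 - l + l * (1 - y)) with (1 - x) in hconv by lra.
  assert (hpow : rpow x p <= l * rpow y p).
  { rewrite Ex, rpow_mult_distr by lra. pose proof (rpow_le_self l p hl hp).
    pose proof (rpow_ge0 y p). nra. }
  pose proof (rpow_le_1 (1 - y) p ltac:(lra) ltac:(lra)).
  pose proof (rpow_ge0 y p).
  nra.
Qed.

Lemma sin_le_add_of_cos_angle_le u v w : 0 <= u <= 1 -> 0 <= v <= 1 -> 0 <= w <= 1 ->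
  v*w - sqrt (1 - v^2) * sqrt (1 - w^2) <= u ->
  sqrt (1 - u^2) <= sqrt (1 - v^2) + sqrt (1 - w^2).
Proof.
  intros hu hv hw hangle.
  pose proof (pow2_sqrt (1 - u^2) ltac:(nra)) as Eu.
  pose proof (pow2_sqrt (1 - v^2) ltac:(nra)) as Ev.
  pose proof (pow2_sqrt (1 - w^2) ltac:(nra)) as Ew.
  pose proof (sqrt_pos (1 - u^2)). pose proof (sqrt_pos (1 - v^2)). pose proof (sqrt_pos (1 - w^2)).
  set (su := sqrt (1 - u^2)) in *. set (sv := sqrt (1 - v^2)) in *.
  set (sw := sqrt (1 - w^2)) in *.
  apply Rsqr_incr_0_var; [unfold Rsqr|lra].
  destruct (Rle_lt_dec (v*w - sv*sw) 0) as [hobtuse|hacute].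
  - nra.
  - (* cos^2 + sin^2 = 1 for the angle with cosine v w - sv sw and sine sv w + v sw *)
    assert (Hpyth : (v*w - sv*sw)^2 + (sv*w + v*sw)^2 = 1).
    { replace ((v*w - sv*sw)^2 + (sv*w + v*sw)^2) with ((v^2 + sv^2)*(w^2 + sw^2)) by ring.
      rewrite Ev, Ew. ring. }
    assert ((v*w - sv*sw)^2 <= u^2) by nra.
    assert (0 <= sv*w + v*sw <= sv + sw) by nra.
    nra.
Qed.

Definition kcompl (k t : R) : R := rpow (1 - rpow t k) (/ k).

Definition kcompl_sine (k s : R) : R := rpow (1 - rpow (1 - s^2) (k/2)) (/ k).

Lemma kcompl_sine_sqrt k u : 0 <= u <= 1 -> kcompl_sine k (sqrt (1 - u^2)) = kcompl k u.
Proof.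
  intros hu. unfold kcompl_sine, kcompl. rewrite pow2_sqrt by nra.
  replace (1 - (1 - u^2)) with (u^2) by ring. rewrite rpow_sqr by lra. reflexivity.
Qed.

Section Kcompl_sine.

Variable k : R.
Hypothesis k_ge2 : 2 <= k.

Lemma kcompl_sine_pow s : 0 <= s <= 1 ->
  rpow (kcompl_sine k s) k = 1 - rpow (1 - s^2) (k/2).
Proof.
  intros hs. pose proof (rpow_le_1 (1 - s^2) (k/2) ltac:(nra) ltac:(lra)).
  unfold kcompl_sine. rewrite rpow_mult by lra.
  replace (/ k * k) with 1 by (field; lra). apply rpow_1_r; lra.
Qed.

Lemma kcompl_sine_le_compat s m : 0 <= s -> s <= m -> m <= 1 ->
  kcompl_sine k s <= kcompl_sine k m.
Proof.
  intros hs hsm hm. unfold kcompl_sine.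
  apply rpow_le_compat; [|left; apply Rinv_0_lt_compat; lra].
  pose proof (rpow_le_compat (1 - m^2) (1 - s^2) (k/2) ltac:(nra) ltac:(lra)).
  pose proof (rpow_le_1 (1 - s^2) (k/2) ltac:(nra) ltac:(lra)).
  lra.
Qed.

Lemma kcompl_sine_ratio_le s m : 0 <= s -> s <= m -> m <= 1 ->
  s * kcompl_sine k m <= m * kcompl_sine k s.
Proof.
  intros hs hsm hm.
  pose proof (rpow_ge0 (1 - rpow (1 - m^2) (k/2)) (/ k)).
  pose proof (rpow_ge0 (1 - rpow (1 - s^2) (k/2)) (/ k)).
  fold (kcompl_sine k m) (kcompl_sine k s) in *.
  destruct (Req_dec s 0) as [->|ns]; [nra|].
  apply (rpow_le_reg _ _ k); try nra.
  rewrite !rpow_mult_distr, !kcompl_sine_pow by lra.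
  rewrite <- (rpow_sqr s), <- (rpow_sqr m) by lra.
  apply rpow_compl_cross_le; nra.
Qed.

(* With m = min(s1 + s2, 1): psi s <= psi m <= (s1/m) psi m + (s2/m) psi m <= psi s1 + psi s2. *)
Lemma kcompl_sine_le_add s s1 s2 : 0 <= s -> 0 <= s1 <= 1 -> 0 <= s2 <= 1 ->
  s <= s1 + s2 -> s <= 1 ->
  kcompl_sine k s <= kcompl_sine k s1 + kcompl_sine k s2.
Proof.
  intros hs hs1 hs2 hsum hs_le1.
  set (m := Rmin (s1 + s2) 1).
  assert (hm : m <= 1 /\ m <= s1 + s2) by (split; [apply Rmin_r | apply Rmin_l]).
  assert (hsm : s <= m /\ s1 <= m /\ s2 <= m) by (repeat split; apply Rmin_glb; lra).
  clearbody m.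
  pose proof (kcompl_sine_le_compat s m hs (proj1 hsm) (proj1 hm)).
  pose proof (kcompl_sine_ratio_le s1 m (proj1 hs1) (proj1 (proj2 hsm)) (proj1 hm)).
  pose proof (kcompl_sine_ratio_le s2 m (proj1 hs2) (proj2 (proj2 hsm)) (proj1 hm)).
  pose proof (rpow_ge0 (1 - rpow (1 - m^2) (k/2)) (/ k)).
  pose proof (rpow_ge0 (1 - rpow (1 - s1^2) (k/2)) (/ k)).
  pose proof (rpow_ge0 (1 - rpow (1 - s2^2) (k/2)) (/ k)).
  fold (kcompl_sine k m) (kcompl_sine k s1) (kcompl_sine k s2) in *.
  destruct (Req_dec m 0) as [E|nm].
  - assert (s1 = m) by lra. subst s1. lra.
  - assert (kcompl_sine k m <= kcompl_sine k s1 + kcompl_sine k s2).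
    { apply (Rmult_le_reg_l m); nra. }
    lra.
Qed.

Lemma kcompl_le_add_of_cos_angle_le u v w : 0 <= u <= 1 -> 0 <= v <= 1 -> 0 <= w <= 1 ->
  v*w - sqrt (1 - v^2) * sqrt (1 - w^2) <= u ->
  kcompl k u <= kcompl k v + kcompl k w.
Proof.
  intros hu hv hw hangle.
  assert (sqrt_range : forall t, 0 <= t <= 1 -> 0 <= sqrt (1 - t^2) <= 1).
  { intros t ht. split; [apply sqrt_pos|].
    rewrite <- sqrt_1 at 2. apply sqrt_le_1_alt. nra. }
  rewrite <- !kcompl_sine_sqrt by assumption.
  pose proof (sqrt_range u hu).
  apply kcompl_sine_le_add; try apply sqrt_range; try lra.
  apply sin_le_add_of_cos_angle_le; assumption.
Qed.

End Kcompl_sine.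

Theorem theorem4 (a b c : R) (HB : psd3 a b c) :
  (forall (I : R -> Prop) (f g : R -> R),
     interval_in_nonneg I ->
     (forall p q, I p -> I q -> p < q -> f q < f p) ->
     (forall y, -1 <= y <= 1 <-> exists p, I p /\ f p = y) ->
     (forall p q, I p -> I q -> I (p + q) ->
        f (p + q) = f p * f q - sqrt (1 - f p ^ 2) * sqrt (1 - f q ^ 2)) ->
     metric_preserving g ->
     forall pa pb pc, I pa -> I pb -> I pc ->
       f pa = a -> f pb = b -> f pc = c ->
       g pa <= g pb + g pc) /\
  (forall k : R, 2 <= k ->
     rpow (1 - rpow (Rabs a) k) (/ k)
       <= rpow (1 - rpow (Rabs b) k) (/ k) + rpow (1 - rpow (Rabs c) k) (/ k)).
Proof.
  split.
  - intros I f g HI Hdecr _ Hadd Hg pa pb pc Ia Ib Ic Ea Eb Ec.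
    destruct (psd3_inv_triangle I f HI Hdecr Hadd pa pb pc Ia Ib Ic) as (t1 & t2 & t3).
    { rewrite Ea, Eb, Ec. exact HB. }
    destruct HI as [I_nonneg _].
    apply metric_preserving_triangle; auto.
  - intros k hk.
    destruct (psd3_abs_le1 a b c HB) as (ha & hb & hc).
    pose proof (Rabs_pos a). pose proof (Rabs_pos b). pose proof (Rabs_pos c).
    apply (kcompl_le_add_of_cos_angle_le k hk); try lra.
    exact (psd3_abs_cos_angle_ge a b c HB).
Qed.
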